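(* Let $G$ be a strongly connected signed digraph on $[n]$ without positive cycles, which is not a cycle. If $\tau(G)\le 1$, then there is a word $w$ of length $3n-1$ which synchronizes every and-or-net on $G$.
   Context: A signed digraph on $V$ is $(V,E)$ with $E\subseteq V\times V\times\{-1,1\}$ (loops allowed). Cycles have no repeated vertices (a loop is a cycle); the sign of a cycle is the product of its arc signs; ''$G$ is a cycle'' means $G$ itself is a single cycle. $\tau(G)$ is the minimum size of a feedback vertex set of $G$ (a set of vertices meeting every cycle). A Boolean network (BN) is $f:\{0,1\}^V\to\{0,1\}^V$; its signed interaction digraph has a positive (negative) arc from $j$ to $i$ iff for some $x$ with $x_j=0$, $f_i(x+e_j)-f_i(x)$ is positive (negative). An and-or-net on $G$ is a BN whose signed interaction digraph is $G$ and each $f_i$ is a conjunction ($f_i(x)=1$ iff $x_j=1$ for all positive and $x_j=0$ for all negative in-neighbors $j$ of $i$) or a disjunction ($f_i(x)=0$ iff $x_j=0$ for all positive and $x_j=1$ for all negative in-neighbors). $f^i(x)$ is $x$ with $x_i$ replaced by $f_i(x)$; $f^{i_1\cdots i_\ell}=f^{i_\ell}\circ\cdots\circ f^{i_1}$; $w$ synchronizes $f$ if $f^w$ is constant. *)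

From mathcomp Require Import all_boot all_order all_algebra.
From Stdlib Require Import ClassicalEpsilon.
Set Implicit Arguments. Unset Strict Implicit. Unset Printing Implicit Defensive.
Import GRing.Theory.

(* Vertex set [n] = 'I_n.  An arc (j, i, s) goes from j to i with sign s,
   where the boolean s encodes the sign: true = +1, false = -1. *)
Definition arc n := ('I_n * 'I_n * bool)%type.
Definition signed_digraph n := {set arc n}.

Definition arc_src n (a : arc n) : 'I_n := a.1.1.
Definition arc_tgt n (a : arc n) : 'I_n := a.1.2.
Definition arc_sign n (a : arc n) : int := if a.2 then 1%R else (-1)%R.

Definition is_cyc n (G : signed_digraph n) (c : seq (arc n)) : bool :=
  [&& c != [::], all (fun a => a \in G) c,
      cycle (fun a b => arc_tgt a == arc_src b) c & uniq (map (@arc_src n) c)].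

Definition cyc_sign n (c : seq (arc n)) : int := \prod_(a <- c) arc_sign a.

Definition no_positive_cycle n (G : signed_digraph n) : Prop :=
  forall c, is_cyc G c -> cyc_sign c <> 1%R.

Definition is_cycle_digraph n (G : signed_digraph n) : Prop :=
  exists c, [/\ is_cyc G c, (forall a, (a \in G) = (a \in c))
              & forall v : 'I_n, v \in map (@arc_src n) c].

Definition adj n (G : signed_digraph n) : rel 'I_n :=
  fun u v => [exists s : bool, (u, v, s) \in G].

Definition strongly_connected n (G : signed_digraph n) : Prop :=
  forall u v : 'I_n, connect (adj G) u v.

Definition fvs n (G : signed_digraph n) (X : {set 'I_n}) : Prop :=
  forall c, is_cyc G c -> has (fun a => arc_src a \in X) c.

Definition tau_pred n (G : signed_digraph n) : pred nat :=
  fun k => if excluded_middle_informative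
                (exists X : {set 'I_n}, #|X| = k /\ fvs G X) then true else false.

Lemma tau_pred_ex n (G : signed_digraph n) : exists k, tau_pred G k.
Proof.
exists #|[set: 'I_n]|; rewrite /tau_pred.
case: excluded_middle_informative => // [[]].
exists [set: 'I_n]; split => // c /and4P [+ _ _ _].
by case: c => // a c _ /=; rewrite in_setT.
Qed.

Definition tau n (G : signed_digraph n) : nat := ex_minn (tau_pred_ex G).

Definition state n := {ffun 'I_n -> bool}.
Definition BN n := state n -> state n.

Definition setc n (x : state n) (j : 'I_n) (b : bool) : state n :=
  [ffun k => if k == j then b else x k].

Definition interaction_digraph n (f : BN n) : signed_digraph n :=
  [set a : arc n | [exists x : state n,
     [&& ~~ x (arc_src a),
         f x (arc_tgt a) == ~~ a.2 &
         f (setc x (arc_src a) true) (arc_tgt a) == a.2]]].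

Definition is_conjunction_at n (G : signed_digraph n) (f : BN n) (i : 'I_n) :=
  forall x : state n, f x i =
    [forall j : 'I_n, (((j, i, true) \in G) ==> x j) &&
                      (((j, i, false) \in G) ==> ~~ x j)].

Definition is_disjunction_at n (G : signed_digraph n) (f : BN n) (i : 'I_n) :=
  forall x : state n, f x i =
    ~~ [forall j : 'I_n, (((j, i, true) \in G) ==> ~~ x j) &&
                         (((j, i, false) \in G) ==> x j)].

Definition and_or_net n (G : signed_digraph n) (f : BN n) : Prop :=
  interaction_digraph f = G /\
  forall i, is_conjunction_at G f i \/ is_disjunction_at G f i.

(* asynchronous update f^i and words f^w (first letter applied first) *)
Definition upd n (f : BN n) (i : 'I_n) (x : state n) : state n := setc x i (f x i).
Definition upd_word n (f : BN n) (w : seq 'I_n) (x : state n) : state n :=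
  foldl (fun y i => upd f i y) x w.

Definition synchronizes n (w : seq 'I_n) (f : BN n) : Prop :=
  exists y : state n, forall x, upd_word f w x = y.

From Pilot Require Import Defs.
From mathcomp Require Import all_boot all_order all_algebra.
From mathcomp Require Import zify.
From Stdlib Require Import ClassicalEpsilon.
Set Implicit Arguments. Unset Strict Implicit. Unset Printing Implicit Defensive.
Import GRing.Theory.

(* Pick v with {v} a feedback vertex set, so that G - v is acyclic, and let T list
   the other vertices in a topological order of G - v.  Since G is strongly
   connected without positive cycle, all paths from v that do not return to v
   have a parity of negative arcs depending only on their end; this yields a
   switching sig, sig v = false, under which every arc is positive except the
   arcs entering v, which are negative.  Hence, from any state x, updating T sets
   every x_u to x_v xor sig u (all inputs of an and/or node then agree), and
   updating v flips x_v.  As G is not a cycle, walking back from v through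
   vertices with a single in-neighbour ends at a vertex w with two in-neighbours
   j, j' such that j' does not reach j in G - v.  Updating the ancestors A of j
   in G - v flips them too, so the inputs of w from j and j' disagree and w
   becomes constant; the constant travels along the chain Zs from w to v, and a
   last pass over T makes the state constant.  As A and w Zs are disjoint, the
   word T v A w Zs T has length at most (n - 1) + 1 + n + (n - 1). *)

Section SimpleCycles.
Variables (n : nat) (G : signed_digraph n).

Definition pos_arc (x y : 'I_n) : bool := (x, y, true) \in G.

Lemma adj_arc x y : adj G x y -> (x, y, pos_arc x y) \in G.
Proof.
rewrite /pos_arc => /existsP[s xy]; case pxy: ((x, y, true) \in G) => //.
by case: s xy pxy => // ->.
Qed.

Lemma arc_adj x y s : (x, y, s) \in G -> adj G x y.
Proof. by move=> xy; apply/existsP; exists s. Qed.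

Fixpoint path_arcs (x : 'I_n) (s : seq 'I_n) : seq (Defs.arc n) :=
  if s is y :: s' then (x, y, pos_arc x y) :: path_arcs y s' else [::].

Fixpoint path_odd (x : 'I_n) (s : seq 'I_n) : bool :=
  if s is y :: s' then ~~ pos_arc x y (+) path_odd y s' else false.

Lemma path_odd_cat x s1 s2 :
  path_odd x (s1 ++ s2) = path_odd x s1 (+) path_odd (last x s1) s2.
Proof. by elim: s1 x => [|y s IH] x //=; rewrite IH addbA. Qed.

Lemma path_arcs_rcons x s a c : arc_tgt a = x -> arc_src c = last x s ->
  path (fun a b => arc_tgt a == arc_src b) a (rcons (path_arcs x s) c).
Proof.
elim: s x a => [|y s IH] x a /= ax cx; first by rewrite ax cx eqxx.
by rewrite ax eqxx; apply: IH.
Qed.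

Definition close_path x s b := rcons (path_arcs x s) (last x s, x, b).

Lemma close_path_src x s b : map (@arc_src n) (close_path x s b) = x :: s.
Proof.
rewrite /close_path map_rcons lastI; congr rcons.
by elim: s x => [|y s IH] x //=; rewrite IH.
Qed.

Lemma close_path_sign x s b :
  cyc_sign (close_path x s b) = ((-1) ^+ (path_odd x s (+) ~~ b))%R.
Proof.
rewrite /cyc_sign /close_path -cats1 big_cat big_seq1 /arc_sign /=.
elim: s x => [|y s IH] x /=; first by rewrite big_nil; case: b.
rewrite big_cons -mulrA IH /=.
by case: (pos_arc x y); case: (path_odd y s); case: (b) IH; rewrite ?mulN1r ?opprK ?mul1r.
Qed.

Lemma close_path_cyc x s b : path (adj G) x s -> uniq (x :: s) ->
  (last x s, x, b) \in G -> is_cyc G (close_path x s b).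
Proof.
move=> xs uxs lastx; apply/and4P; split.
- by rewrite /close_path; case: path_arcs.
- rewrite all_rcons lastx /=.
  by elim: s x xs {uxs lastx} => [|y s IH] x //= /andP[/adj_arc -> /IH].
- rewrite /close_path (cycle_path (last x s, x, b)) last_rcons.
  exact: path_arcs_rcons.
- by rewrite close_path_src.
Qed.

Hypothesis no_pos : no_positive_cycle G.

Lemma simple_cycle_odd x s b : path (adj G) x s -> uniq (x :: s) ->
  (last x s, x, b) \in G -> path_odd x s (+) ~~ b.
Proof.
move=> xs uxs lastx; apply/negPn/negP => /negbTE even.
by apply: (no_pos (close_path_cyc xs uxs lastx)); rewrite close_path_sign even.
Qed.

Hypothesis sc : strongly_connected G.

Lemma simple_path_ex x y : exists2 s, path (adj G) x s & last x s = y /\ uniq (x :: s).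
Proof.
case/connectP: (sc x y) => s0 /shortenP[s xs uxs _] -> {s0}.
by exists s.
Qed.

Lemma arc_signE j i s : (j, i, s) \in G -> s = pos_arc j i.
Proof.
case: s => [// | neg]; apply/esym/negbTE; apply/negP => pos.
have [s ijs [lastj uis]] := simple_path_ex i j.
have := simple_cycle_odd ijs uis; rewrite lastj => odd.
by move: (odd _ pos) (odd _ neg); rewrite addbF addbT => ->.
Qed.

End SimpleCycles.

Lemma path_connect_last (T : finType) (e : rel T) x s z :
  path e x s -> z \in x :: s -> connect e z (last x s).
Proof.
elim: s x z => [|y s IH] x z /=; first by move=> _; rewrite inE => /eqP ->.
case/andP=> xy ys; rewrite inE => /predU1P[->|/IH->//].
exact: connect_trans (connect1 xy) (IH _ _ ys (mem_head _ _)).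
Qed.

Lemma uniq_size_ord n (s : seq 'I_n) : uniq s -> size s <= n.
Proof. by move/card_uniqP <-; apply: leq_trans (max_card _) _; rewrite card_ord. Qed.

Definition fed_in_order n (G : signed_digraph n) (B : pred 'I_n) (L : seq 'I_n) :=
  forall L1 i L2 j s, L = L1 ++ i :: L2 -> (j, i, s) \in G -> B j || (j \in L1).

Section AvoidingV.
Variables (n : nat) (G : signed_digraph n) (v : 'I_n).
Hypotheses (sc : strongly_connected G) (no_pos : no_positive_cycle G).
Hypothesis fvs_v : fvs G [set v].

Definition adj_avoid : rel 'I_n := fun x y => [&& adj G x y, x != v & y != v].

Lemma avoid_path_notin x s : path adj_avoid x s -> v \notin s.
Proof.
elim: s x => [|y s IH] x //= /andP[/and3P[_ _ yv] /IH].
by rewrite inE negb_or eq_sym yv.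
Qed.

Lemma avoid_pathE x s : x != v -> path adj_avoid x s = path (adj G) x s && (v \notin s).
Proof.
elim: s x => [|y s IH] x xv //=; rewrite inE negb_or [v == y]eq_sym {1}/adj_avoid xv /=.
have [->|yv] := eqVneq y v; first by rewrite !andbF.
by rewrite IH // andbT; case: (adj G x y).
Qed.

Lemma cycle_hits_v x s b : path (adj G) x s -> uniq (x :: s) ->
  (last x s, x, b) \in G -> v \in x :: s.
Proof.
move=> xs uxs lastx; have := fvs_v (close_path_cyc xs uxs lastx).
case/hasP=> a ain; rewrite in_set1 => /eqP <-.
by rewrite -(close_path_src G x s b); apply: map_f.
Qed.

Lemma avoid_acyclic x y : adj_avoid x y -> ~~ connect adj_avoid y x.
Proof.
case/and3P=> xy xv yv; apply/negP => /connectP[s0 /shortenP[s ys uys _] xlast] {s0}.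
move: ys; rewrite avoid_pathE // => /andP[ys vs].
have := cycle_hits_v ys uys (b := pos_arc G x y); rewrite -xlast inE (negPf vs) orbF.
by rewrite eq_sym (negPf yv) => /(_ (adj_arc xy)).
Qed.

Lemma connect_avoid_antisym x y :
  connect adj_avoid x y -> connect adj_avoid y x -> x = y.
Proof.
case/connectP=> [[|z s]] /=; first by move=> _ ->.
case/andP=> xz zs ylast yx; case/negP: (avoid_acyclic xz).
by apply: connect_trans yx; rewrite ylast; apply: (path_connect zs); exact: mem_last.
Qed.

Lemma avoid_path_uniq x s : path adj_avoid x s -> uniq (x :: s).
Proof.
elim: s x => [|y s IH] x //= /andP[xy ys]; rewrite -/(uniq (y :: s)) IH // andbT.
by apply/negP => /(path_connect ys) yx; case/negP: (avoid_acyclic xy).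
Qed.

Lemma connect_avoid_from_v y : connect adj_avoid v y -> y = v.
Proof. by case/connectP=> [[|z s]] //= /andP[/and3P[_ /eqP]]. Qed.

Lemma connect_avoid_to_v y : connect adj_avoid y v -> y = v.
Proof.
case/connectP=> s; case/lastP: s => [|s z] /=; first by move=> _ ->.
by rewrite rcons_path last_rcons => /andP[_ /and3P[_ _]] /[swap] ->; rewrite eqxx.
Qed.

Definition vpath u p := [&& path (adj G) v p, last v p == u & v \notin p].

Lemma vpath_ex u : exists p, vpath u p.
Proof.
have [p vp [lastp /andP[vnp _]]] := simple_path_ex sc v u.
by exists p; rewrite /vpath vp lastp eqxx.
Qed.

Lemma vpath_v p : vpath v p -> p = [::].
Proof.
case: p => [|z p] // /and3P[_ /eqP lastp]; rewrite -lastp.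
by move: (mem_last z p); rewrite inE => ->.
Qed.

Lemma vpath_uniq_connect u p :
  vpath u p -> uniq (v :: p) /\ {in p, forall z, connect adj_avoid z u}.
Proof.
case: p => [|z p] // /and3P[/= /andP[_ zp] /eqP lastp vnp].
have [zv vp] : z != v /\ v \notin p by move: vnp; rewrite in_cons negb_or eq_sym => /andP[].
have zpa : path adj_avoid z p by rewrite avoid_pathE // zp.
split; first by rewrite /= vnp; apply: avoid_path_uniq.
by move=> y; rewrite -lastp; apply: path_connect_last.
Qed.

(* Closing [v :: p ++ q] gives a simple cycle: a common vertex of [p] and [q]
   would reach [u] and be reached from it in the acyclic graph [G - v]. *)
Lemma vpath_parity u p q b : vpath u p -> path adj_avoid u q ->
  (last u q, v, b) \in G -> path_odd G v p = path_odd G u q (+) b.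
Proof.
move=> vpu uq lastq; have [uvp pu] := vpath_uniq_connect vpu.
case/and3P: vpu => vp /eqP lastp vnp.
have uniq_pq : uniq (v :: p ++ q).
  rewrite /= mem_cat negb_or vnp (avoid_path_notin uq) cat_uniq.
  move: uvp (avoid_path_uniq uq) => /= /andP[_ ->] /andP[uq' ->]; rewrite andbT.
  apply/hasPn => z zq; apply/negP => zp.
  have uz : connect adj_avoid u z by apply: (path_connect uq); rewrite inE zq orbT.
  have zu := connect_avoid_antisym (pu z zp) uz.
  by move: uq'; rewrite -zu zq.
have vpq : path (adj G) v (p ++ q).
  by rewrite cat_path vp lastp (sub_path _ uq) // => x y /and3P[].
have := simple_cycle_odd no_pos vpq uniq_pq; rewrite last_cat lastp path_odd_cat lastp.
by move=> /(_ b lastq); case: (path_odd G v p); case: (path_odd G u q); case: (b).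
Qed.

Definition switching u := path_odd G v (xchoose (vpath_ex u)).

Lemma switching_vpath u p : vpath u p -> switching u = path_odd G v p.
Proof.
have [->|uv] := eqVneq u v.
  by move=> /vpath_v ->; rewrite /switching (vpath_v (xchooseP (vpath_ex v))).
have [s us [lasts uus]] := simple_path_ex sc u v.
case/lastP: s us lasts uus => [/= _ /eqP|q y]; first by rewrite (negPf uv).
rewrite last_rcons rcons_path => /andP[uq qv] yv; subst y.
rewrite -rcons_cons rcons_uniq in_cons negb_or => /andP[/andP[_ vq] _].
have uqa : path adj_avoid u q by rewrite avoid_pathE // uq vq.
move=> vpu; rewrite /switching.
rewrite (vpath_parity (xchooseP (vpath_ex u)) uqa (adj_arc qv)).
by rewrite (vpath_parity vpu uqa (adj_arc qv)).
Qed.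

Lemma switching_v : switching v = false.
Proof. by rewrite (switching_vpath (p := [::])) // /vpath /= eqxx. Qed.

Lemma switching_arc j i s :
  (j, i, s) \in G -> s = (switching j == switching i) (+) (i == v).
Proof.
move=> ji; have [p vpj] := vpath_ex j; rewrite (switching_vpath vpj).
have [iv|iv] := eqVneq i v.
  rewrite iv switching_v in ji *.
  by rewrite (vpath_parity vpj (q := [::]) _ ji) //=; case: (s).
have vpi : vpath i (rcons p i).
  case/and3P: vpj => vp /eqP lastp vnp.
  rewrite /vpath rcons_path vp lastp (arc_adj ji) last_rcons eqxx.
  by rewrite mem_rcons inE negb_or eq_sym iv.
rewrite (switching_vpath vpi) -cats1 path_odd_cat /= addbF (arc_signE no_pos sc ji).
case/and3P: vpj => _ /eqP -> _.
by case: (path_odd G v p); case: (pos_arc G j i).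
Qed.

Definition avoid_rank u := #|[set z | connect adj_avoid z u]|.

Lemma avoid_rank_lt x y : adj_avoid x y -> avoid_rank x < avoid_rank y.
Proof.
move=> xy; apply/proper_card/properP; split.
  by apply/subsetP => z; rewrite !inE => /connect_trans; apply; exact: connect1.
by exists y; rewrite !inE ?connect0 // (negPf (avoid_acyclic xy)).
Qed.

Definition rank_le : rel 'I_n := fun x y => avoid_rank x <= avoid_rank y.

Lemma sorted_fed_in_order L : sorted rank_le L -> v \notin L ->
  {in L, forall i j, adj_avoid j i -> j \in L} -> fed_in_order G (pred1 v) L.
Proof.
move=> sL vL closedL L1 i L2 j s defL ji.
have [-> | jv] := eqVneq j v; first by rewrite /= eqxx.
have iL : i \in L by rewrite defL mem_cat mem_head orbT.
have iv : i != v by apply: contraNneq vL => <-.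
have avoid_ji : adj_avoid j i by rewrite /adj_avoid (arc_adj ji) jv iv.
have := closedL i iL j avoid_ji; rewrite defL mem_cat => /orP[jL1 | jiL2].
  by rewrite jL1 orbT.
have rank_ij : rank_le i j.
  move: sL; rewrite defL sorted_cat_cons => /andP[_ /(order_path_min _) iL2].
  move: jiL2; rewrite inE => /predU1P[-> | jL2]; first exact: leqnn.
  by apply: (allP (iL2 _)) jL2 => y x z; apply: leq_trans.
by have := leq_trans (avoid_rank_lt avoid_ji) rank_ij; rewrite ltnn.
Qed.

Definition avoid_order := sort rank_le [seq u <- enum 'I_n | u != v].

Lemma mem_avoid_order u : (u \in avoid_order) = (u != v).
Proof. by rewrite mem_sort mem_filter mem_enum andbT. Qed.

Lemma avoid_order_uniq : uniq avoid_order.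
Proof. by rewrite sort_uniq filter_uniq // enum_uniq. Qed.

Lemma avoid_order_sorted : sorted rank_le avoid_order.
Proof. by apply: sort_sorted => x y; apply: leq_total. Qed.

Lemma avoid_order_fed : fed_in_order G (pred1 v) avoid_order.
Proof.
apply: sorted_fed_in_order avoid_order_sorted _ _; first by rewrite mem_avoid_order eqxx.
by move=> i _ j /and3P[_ jv _]; rewrite mem_avoid_order.
Qed.

Definition upstream p := [seq a <- avoid_order | connect adj_avoid a p].

Lemma mem_upstream p u : (u \in upstream p) = (u != v) && connect adj_avoid u p.
Proof. by rewrite mem_filter mem_avoid_order andbC. Qed.

Lemma upstream_fed p : fed_in_order G (pred1 v) (upstream p).
Proof.
apply: sorted_fed_in_order.
- by apply: sorted_filter avoid_order_sorted => y x z; apply: leq_trans.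
- by rewrite mem_upstream eqxx.
move=> i; rewrite mem_upstream => /andP[_ ip] j ji.
by rewrite mem_upstream (connect_trans (connect1 ji) ip); case/and3P: ji => _ ->.
Qed.

End AvoidingV.

Section SoleInNeighbour.
Variables (n : nat) (G : signed_digraph n).
Hypotheses (sc : strongly_connected G) (no_pos : no_positive_cycle G).

Definition sole_in x y := adj G x y && [forall j, adj G j y ==> (j == x)].

Lemma sole_inP x y j s : sole_in x y -> (j, y, s) \in G -> j = x.
Proof. by case/andP=> _ /forallP/(_ j)/implyP + /arc_adj => /[apply] /eqP. Qed.

Lemma sole_in_cycle c : c != [::] -> uniq c -> cycle sole_in c -> is_cycle_digraph G.
Proof.
move=> c0 uc cc; have prevc y : y \in c -> sole_in (prev c y) y := prev_cycle cc.
have all_in u : u \in c.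
  have [y0 y0c] : exists y0, y0 \in c.
    by case: c c0 {uc cc prevc} => // y0 c _; exists y0; exact: mem_head.
  case/connectP: (sc u y0) => s; elim: s u => [|z s IH] u /=; first by move=> _ <-.
  case/andP=> /existsP[b uz] zs /(IH _ zs) zc.
  by rewrite (sole_inP (prevc z zc) uz) mem_prev.
pose arc_to y := (prev c y, y, pos_arc G (prev c y) y).
have arc_toG y : y \in c -> arc_to y \in G.
  by move=> yc; apply/adj_arc; case/andP: (prevc y yc).
exists (map arc_to c); split.
- apply/and4P; split.
  + by case: (c) c0.
  + by apply/allP => _ /mapP[y yc ->]; exact: arc_toG.
  + rewrite cycle_map; apply: sub_cycle (cycle_next uc) => x y /eqP <-.
    by rewrite /relpre /arc_to /arc_tgt /arc_src /= prev_next.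
  + by rewrite -map_comp (map_inj_uniq (can_inj (next_prev uc))).
- case=> [[j i] s]; apply/idP/idP => [ji | /mapP[y yc ->]]; last exact: arc_toG.
  rewrite (arc_signE no_pos sc ji) (sole_inP (prevc i (all_in i)) ji).
  exact: map_f.
- move=> u; rewrite -map_comp; apply/mapP; exists (next c u); first by rewrite mem_next.
  by rewrite /arc_src /= prev_next.
Qed.

Lemma sole_in_chain_ex t : ~ is_cycle_digraph G ->
  exists2 w, ~~ [exists x, sole_in x w] &
    exists Zs, [/\ path sole_in w Zs, last w Zs = t & uniq (w :: Zs)].
Proof.
move=> ncyc; suff chain k z Zs : n - size Zs <= k -> path sole_in z Zs ->
    last z Zs = t -> uniq (z :: Zs) ->
  exists2 w, ~~ [exists x, sole_in x w] &
    exists Zs, [/\ path sole_in w Zs, last w Zs = t & uniq (w :: Zs)].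
  by apply: (chain n t [::]); rewrite ?subn0.
elim: k z Zs => [|k IH] z Zs bound zZs lastZs uzZs.
  by have := uniq_size_ord uzZs; move: bound => /=; lia.
have [/existsP[j jz] | nosole] := boolP [exists x, sole_in x z]; last first.
  by exists z => //; exists Zs.
have [jin | jnotin] := boolP (j \in z :: Zs).
  case: ncyc; case/splitPl: jin uzZs zZs lastZs => Z1 Z2 lastZ1.
  rewrite -cat_cons cat_uniq cat_path => /andP[uZ1 _] /andP[zZ1 _] _.
  by apply: (sole_in_cycle _ uZ1) => //=; rewrite rcons_path zZ1 lastZ1.
apply: (IH j (z :: Zs)) => //=; [by move: bound; lia | by rewrite jz | by rewrite jnotin].
Qed.

Lemma sole_in_path_fed w Zs : path sole_in w Zs -> fed_in_order G (pred1 w) Zs.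
Proof.
move=> wZs L1 i L2 j s defZs ji; move: wZs; rewrite defZs cat_path /= => /and3P[_ sole _].
rewrite (sole_inP sole ji); have := mem_last w L1; rewrite inE.
by case/predU1P=> [-> | ->]; rewrite ?eqxx ?orbT.
Qed.

End SoleInNeighbour.

Lemma forall_bool (P : pred bool) : [forall s, P s] = P true && P false.
Proof. by apply/forallP/andP => [PT | [PT PF] []]. Qed.

Lemma exists_bool (P : pred bool) : [exists s, P s] = P true || P false.
Proof.
by apply/existsP/orP => [[[] Ps] | [PT | PF]]; [left | right | exists true | exists false].
Qed.

Section AndOrDynamics.
Variables (n : nat) (G : signed_digraph n) (f : BN n).
Hypothesis f_and_or : forall i, is_conjunction_at G f i \/ is_disjunction_at G f i.

Definition all_sat (x : state n) i :=
  [forall j, [forall s, ((j, i, s) \in G) ==> (x j == s)]].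
Definition some_sat (x : state n) i :=
  [exists j, [exists s, ((j, i, s) \in G) && (x j == s)]].

Lemma and_or_sat i :
  exists c : bool, forall x, f x i = if c then all_sat x i else some_sat x i.
Proof.
case: (f_and_or i) => fi; [exists true | exists false] => x; rewrite fi.
  apply: eq_forallb => j; rewrite forall_bool.
  by case: (x j); case: ((j, i, true) \in G); case: ((j, i, false) \in G).
rewrite negb_forall; apply: eq_existsb => j; rewrite exists_bool.
by case: (x j); case: ((j, i, true) \in G); case: ((j, i, false) \in G).
Qed.

Lemma and_or_local (x y : state n) i :
  (forall j s, (j, i, s) \in G -> x j = y j) -> f x i = f y i.
Proof.
move=> xy; have [[] fi] := and_or_sat i; rewrite !fi.
  by apply: eq_forallb => j; apply: eq_forallb => s; case ji: (_ \in G); rewrite //= (xy j s).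
by apply: eq_existsb => j; apply: eq_existsb => s; case ji: (_ \in G); rewrite //= (xy j s).
Qed.

Lemma all_sat_false (x : state n) i j s :
  (j, i, s) \in G -> (x j == s) = false -> all_sat x i = false.
Proof.
by move=> ji xj; apply/negbTE/forallPn; exists j; apply/forallPn; exists s; rewrite ji xj.
Qed.

Lemma some_sat_true (x : state n) i j s : (j, i, s) \in G -> x j == s -> some_sat x i.
Proof. by move=> ji xj; apply/existsP; exists j; apply/existsP; exists s; rewrite ji xj. Qed.

Lemma and_or_unanimous (x : state n) i b : (exists j, adj G j i) ->
  (forall j s, (j, i, s) \in G -> (x j == s) = b) -> f x i = b.
Proof.
move=> [j /existsP[s ji]] sat_b; have [c fi] := and_or_sat i; rewrite fi.
case: c fi => _; case: b sat_b => sat_b.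
- by apply/forallP => k; apply/forallP => t; apply/implyP => /sat_b ->.
- exact: all_sat_false ji (sat_b j s ji).
- exact: some_sat_true ji (sat_b j s ji).
- by apply/negbTE/existsPn => k; apply/existsPn => t; apply/negP => /andP[/sat_b ->].
Qed.

Lemma and_or_mixed (x y : state n) i j s j' s' : (j, i, s) \in G -> (j', i, s') \in G ->
  (x j == s) != (x j' == s') -> (y j == s) != (y j' == s') -> f x i = f y i.
Proof.
move=> ji ji'.
have mixed (z : state n) :
    (z j == s) != (z j' == s') -> all_sat z i = false /\ some_sat z i = true.
  case zj: (z j == s); case zj': (z j' == s') => // _.
    by rewrite (all_sat_false ji' zj') (some_sat_true ji zj).
  by rewrite (all_sat_false ji zj) (some_sat_true ji' zj').
move=> /mixed[x_all x_some] /mixed[y_all y_some].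
by have [[] fi] := and_or_sat i; rewrite !fi ?x_all ?y_all ?x_some ?y_some.
Qed.

Lemma upd_word_rcons L i x : upd_word f (rcons L i) x = upd f i (upd_word f L x).
Proof. exact: foldl_rcons. Qed.

Lemma upd_other i x u : u != i -> upd f i x u = x u.
Proof. by move=> ui; rewrite /upd /setc ffunE (negPf ui). Qed.

Lemma upd_word_cat L1 L2 x : upd_word f (L1 ++ L2) x = upd_word f L2 (upd_word f L1 x).
Proof. exact: foldl_cat. Qed.

Lemma upd_word_notin L x u : u \notin L -> upd_word f L x u = x u.
Proof.
elim: L x => [|i L IH] x //=; rewrite inE negb_or => /andP[ui uL].
by rewrite IH // upd_other.
Qed.

Lemma synchronizes_cat w1 w2 : synchronizes w1 f -> synchronizes (w1 ++ w2) f.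
Proof. by case=> y w1y; exists (upd_word f w2 y) => x; rewrite upd_word_cat w1y. Qed.

Definition local (P : (state n -> state n) -> 'I_n -> Prop) :=
  forall (F F' : state n -> state n) u, (forall x, F x u = F' x u) -> P F u -> P F' u.

Lemma propagate P (B : pred 'I_n) L0 L : local P ->
  (forall F i, i \in L -> (forall j s, (j, i, s) \in G -> P F j) ->
     P (fun x => upd f i (F x)) i) ->
  (forall u, B u -> P (upd_word f L0) u) -> fed_in_order G B L ->
  forall u, B u || (u \in L) -> P (upd_word f (L0 ++ L)) u.
Proof.
move=> Ploc; elim: L L0 B => [|i L IH] L0 B step PB fedL u.
  by rewrite cats0 orbF; exact: PB.
have Pi : P (upd_word f (rcons L0 i)) i.
  apply: Ploc (step _ i (mem_head _ _) _) => [x | j s ji]; first by rewrite upd_word_rcons.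
  by have := fedL [::] i L j s erefl ji; rewrite orbF => /PB.
rewrite -cat_rcons => Bu; apply: (IH _ [pred t | (t == i) || B t]).
- by move=> F k kL; apply: step; rewrite inE kL orbT.
- move=> t /= /predU1P[-> // | Bt]; have [-> // | ti] := eqVneq t i.
  by apply: Ploc (PB t Bt) => x; rewrite upd_word_rcons upd_other.
- move=> L1 k L2 j s defL kj; have := fedL (i :: L1) k L2 j s (congr1 _ defL) kj.
  by rewrite /= inE; case: (j == i); case: (B j).
- by move: Bu; rewrite /= inE; case: (u == i); case: (B u).
Qed.

Definition const_at (F : state n -> state n) u := forall x y, F x u = F y u.

Lemma const_local : local const_at.
Proof. by move=> F F' u FF' Fu x y; rewrite -!FF'. Qed.

Lemma const_step F i : (forall j s, (j, i, s) \in G -> const_at F j) ->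
  const_at (fun x => upd f i (F x)) i.
Proof.
move=> const_in x y; rewrite /upd /setc !ffunE eqxx.
by apply: and_or_local => j s /const_in; apply.
Qed.

Lemma const_propagate (B : pred 'I_n) L0 L :
  (forall u, B u -> const_at (upd_word f L0) u) -> fed_in_order G B L ->
  forall u, B u || (u \in L) -> const_at (upd_word f (L0 ++ L)) u.
Proof. by apply: propagate const_local _ => F i _; apply: const_step. Qed.

Lemma const_synchronizes w : (forall u, const_at (upd_word f w) u) -> synchronizes w f.
Proof.
by move=> const_w; exists (upd_word f w [ffun=> false]) => x; apply/ffunP => u; exact: const_w.
Qed.

Variables (v : 'I_n) (sig : 'I_n -> bool).
Hypothesis sig_v : sig v = false.
Hypothesis sig_arc : forall j i s, (j, i, s) \in G -> s = (sig j == sig i) (+) (i == v).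
Hypothesis has_in : forall i, exists j, adj G j i.

Definition affine_at k (F : state n -> state n) u := forall x, F x u = x v (+) sig u (+) k.

Lemma affine_local k : local (affine_at k).
Proof. by move=> F F' u FF' Fu x; rewrite -FF'. Qed.

Lemma affine_sat k F x j i s : (j, i, s) \in G -> affine_at k F j ->
  (F x j == s) = x v (+) sig i (+) k (+) (i == v).
Proof.
move=> ji ->; rewrite (sig_arc ji).
by case: (x v); case: (sig j); case: (sig i); case: k; case: (i == v).
Qed.

Lemma affine_step k F i : (forall j s, (j, i, s) \in G -> affine_at k F j) ->
  affine_at (k (+) (i == v)) (fun x => upd f i (F x)) i.
Proof.
move=> affine_in x; rewrite /upd /setc ffunE eqxx addbA.
by apply: and_or_unanimous => // j s ji; rewrite (affine_sat _ ji (affine_in j s ji)).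
Qed.

Lemma affine_propagate k (B : pred 'I_n) L0 L : v \notin L ->
  (forall u, B u -> affine_at k (upd_word f L0) u) -> fed_in_order G B L ->
  forall u, B u || (u \in L) -> affine_at k (upd_word f (L0 ++ L)) u.
Proof.
move=> vL; apply: propagate (@affine_local k) _ => F i iL affine_in.
have := affine_step affine_in; suff -> : (i == v) = false by rewrite addbF.
by apply: negbTE; apply: contraNneq vL => <-.
Qed.

Lemma const_merge k F i j s j' s' : (j, i, s) \in G -> (j', i, s') \in G ->
  affine_at k F j -> affine_at (~~ k) F j' -> const_at (fun x => upd f i (F x)) i.
Proof.
move=> ji ji' Fj Fj' x y; rewrite /upd /setc !ffunE eqxx.
apply: (and_or_mixed ji ji'); rewrite (affine_sat _ ji Fj) (affine_sat _ ji' Fj');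
  by case: (_ (+) sig i); case: (k); case: (i == v).
Qed.

Section SynchronizingWord.
Variables (T A Zs : seq 'I_n) (w j j' : 'I_n) (s s' : bool).
Hypotheses (T_full : forall u, (u \in T) = (u != v)) (T_fed : fed_in_order G (pred1 v) T).
Hypotheses (A_nv : v \notin A) (A_fed : fed_in_order G (pred1 v) A).
Hypotheses (jw : (j, w, s) \in G) (j'w : (j', w, s') \in G).
Hypotheses (j_in : j \in v :: A) (j'_out : j' \notin v :: A).
Hypotheses (Zs_fed : fed_in_order G (pred1 w) Zs) (v_in : v \in w :: Zs).

Lemma affine_after_TvA u : affine_at (u \in v :: A) (upd_word f (rcons T v ++ A)) u.
Proof.
have T0 t : affine_at false (upd_word f T) t.
  apply: (affine_propagate (B := pred1 v) (L0 := [::])) => //; last by rewrite /= T_full orbN.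
    by rewrite T_full eqxx.
  by move=> _ /eqP -> x; rewrite sig_v !addbF.
have Tv t : affine_at (t == v) (upd_word f (rcons T v)) t.
  have [-> | tv] := eqVneq t v.
    move=> x; rewrite upd_word_rcons.
    by have := affine_step (i := v) (fun j s _ => T0 j) x; rewrite eqxx.
  by move=> x; rewrite upd_word_rcons upd_other // T0.
have [tA | tA] := boolP (u \in v :: A).
  apply: (affine_propagate (B := pred1 v)) => // _ /eqP ->.
  by have := Tv v; rewrite eqxx.
move: tA; rewrite inE negb_or => /andP[uv uA] x.
by rewrite upd_word_cat upd_word_notin // Tv (negPf uv).
Qed.

Lemma TvAwZsT_synchronizes : synchronizes (T ++ v :: A ++ w :: Zs ++ T) f.
Proof.
set W := rcons (rcons T v ++ A) w.
have const_w : const_at (upd_word f W) w.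
  have := affine_after_TvA j; rewrite j_in => Aj.
  have := affine_after_TvA j'; rewrite (negPf j'_out) => Aj'.
  by apply: const_local (const_merge jw j'w Aj Aj') => x; rewrite upd_word_rcons.
have const_v : const_at (upd_word f (W ++ Zs)) v.
  by apply: (const_propagate (B := pred1 w)) => // t /eqP ->.
have -> : T ++ v :: A ++ w :: Zs ++ T = (W ++ Zs) ++ T by rewrite /W -!cats1 -!catA.
apply: const_synchronizes => u.
apply: (const_propagate (B := pred1 v)) => // [t /eqP -> // |].
by rewrite /= T_full orbN.
Qed.

End SynchronizingWord.

End AndOrDynamics.

Section Construction.
Variables (n : nat) (G : signed_digraph n) (v : 'I_n).
Hypotheses (sc : strongly_connected G) (no_pos : no_positive_cycle G).
Hypothesis fvs_v : fvs G [set v].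
Local Notation avoid := (adj_avoid G v).

Lemma sole_in_chain_avoid w Zs : path (sole_in G) w Zs -> last w Zs = v ->
  uniq (w :: Zs) -> {in w :: Zs, forall t, t != v -> connect avoid w t}.
Proof.
move=> wZs lastZs uwZs t tin tv; case/splitPl: tin wZs lastZs uwZs => Z1 Z2 lastZ1.
rewrite cat_path last_cat lastZ1 -cat_cons cat_uniq => /andP[wZ1 _] lastZ2 /and3P[_ disj _].
have vZ2 : v \in Z2.
  by have := mem_last t Z2; rewrite lastZ2 inE eq_sym (negPf tv).
have [wv vZ1] : w != v /\ v \notin Z1.
  apply/andP; rewrite [w == v]eq_sym -negb_or -in_cons.
  by apply: contra disj => vwZ1; apply/hasP; exists v.
rewrite -lastZ1; apply: (path_connect (p := Z1)); last exact: mem_last.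
by rewrite avoid_pathE // vZ1 andbT; apply: sub_path wZ1 => x y /andP[].
Qed.

Lemma incomparable_in_neighbours w : (exists j, adj G j w) -> ~~ [exists x, sole_in G x w] ->
  exists j j', [/\ adj G j w, adj G j' w, j' != v & ~~ connect avoid j' j].
Proof.
move=> [j0 j0w] /existsPn/(_ j0); rewrite /sole_in j0w /= => /forallPn[j1].
rewrite negb_imply => /andP[j1w j10].
have [/andP[j1v nc] | ] := boolP ((j1 != v) && ~~ connect avoid j1 j0); first by exists j0, j1.
rewrite negb_and !negbK => back; exists j1, j0; split => //.
  apply: contraNneq j10 => j0v; move: back; rewrite j0v.
  by case/orP=> [// | /connect_avoid_to_v ->].
apply/negP => c01; case/orP: back => [/eqP j1v | c10].
  by move: c01 j10; rewrite j1v => /connect_avoid_to_v ->; rewrite eqxx.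
by case/eqP: j10; apply: (connect_avoid_antisym fvs_v c10 c01).
Qed.

Lemma upstream_chain_disjoint w Zs j : path (sole_in G) w Zs -> last w Zs = v ->
  uniq (w :: Zs) -> adj G j w -> {in w :: Zs, forall t, t \notin upstream G v j}.
Proof.
move=> wZs lastZs uwZs jw t /(sole_in_chain_avoid wZs lastZs uwZs) wt.
rewrite mem_upstream; apply/negP => /andP[tv tj]; have {}wt := wt tv.
have jv : j != v.
  by apply: contraNneq tv => jv; apply/eqP/(connect_avoid_to_v (G := G)); move: tj; rewrite jv.
have wv : w != v.
  by apply: contraNneq tv => wv; apply/eqP/(connect_avoid_from_v (G := G)); move: wt; rewrite wv.
have jw' : avoid j w by rewrite /adj_avoid jw jv wv.
by case/negP: (avoid_acyclic fvs_v jw'); apply: connect_trans wt tj.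
Qed.

Hypothesis ncyc : ~ is_cycle_digraph G.
Hypothesis has_in : forall i, exists j, adj G j i.

Lemma synchronizing_word_ex : exists2 W : seq 'I_n, size W <= 3 * n - 1 &
  forall f, and_or_net G f -> synchronizes W f.
Proof.
have [w nosole [Zs [wZs lastZs uwZs]]] := sole_in_chain_ex sc no_pos v ncyc.
have [j [j' [jw j'w j'v nc]]] := incomparable_in_neighbours (has_in w) nosole.
set T := avoid_order G v; set A := upstream G v j.
exists (T ++ v :: A ++ w :: Zs ++ T).
  have sizeT : size T < n.
    apply: (uniq_size_ord (s := v :: T)).
    by rewrite /= mem_avoid_order eqxx avoid_order_uniq.
  have : size (A ++ w :: Zs) <= n.
    apply: uniq_size_ord; rewrite cat_uniq uwZs andbT filter_uniq ?avoid_order_uniq //.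
    by apply/hasPn => t /(upstream_chain_disjoint wZs lastZs uwZs jw).
  by rewrite size_cat /= size_cat /= size_cat /= size_cat; lia.
move=> f [_ f_and_or]; have [s jws] := existsP jw; have [s' j'ws] := existsP j'w.
apply: (TvAwZsT_synchronizes f_and_or (switching_v sc no_pos fvs_v) _ has_in _ _ _ _ jws j'ws).
- exact: switching_arc.
- exact: mem_avoid_order.
- exact: avoid_order_fed.
- by rewrite mem_upstream eqxx.
- exact: upstream_fed.
- by rewrite inE mem_upstream connect0 andbT orbN.
- by rewrite inE mem_upstream negb_or j'v.
- exact: sole_in_path_fed.
- by rewrite -lastZs mem_last.
Qed.

End Construction.

Lemma fvs_singleton_of_tau_le1 n (G : signed_digraph n) :
  0 < n -> tau G <= 1 -> exists v, fvs G [set v].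
Proof.
move=> n_gt0; rewrite /tau; case: ex_minnP => k + _ k_le1.
rewrite /tau_pred; case: excluded_middle_informative => // -[X [cardX fvsX]] _.
case: k cardX k_le1 => [|[|//]] cardX _.
  exists (Ordinal n_gt0) => c /fvsX; rewrite (cards0_eq cardX).
  by case/hasP=> a _; rewrite in_set0.
have /cards1P[v defX] : #|X| == 1 by rewrite cardX.
by exists v; rewrite -defX.
Qed.

Lemma source_synchronizes n (G : signed_digraph n) u :
  strongly_connected G -> (forall j, ~~ adj G j u) ->
  forall f, and_or_net G f -> synchronizes [:: u] f.
Proof.
move=> sc no_in f [_ f_and_or]; apply: const_synchronizes => t.
have -> : t = u.
  case/connectP: (sc t u) => s; case/lastP: s => [|s i] /=; first by move=> _ ->.
  by rewrite rcons_path last_rcons => /andP[_ +] ui; rewrite -ui (negPf (no_in _)).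
apply: (const_propagate f_and_or (B := pred0) (L0 := [::])) => [// | L1 i L2 j s |].
  move=> defL /arc_adj; have : i \in [:: u] by rewrite defL mem_cat mem_head orbT.
  by rewrite inE => /eqP ->; rewrite (negPf (no_in j)).
by rewrite /= inE eqxx.
Qed.

Theorem proposition5 (n : nat) (G : signed_digraph n) :
  strongly_connected G -> no_positive_cycle G -> ~ is_cycle_digraph G ->
  tau G <= 1 ->
  exists w : seq 'I_n, size w = 3 * n - 1 /\
    forall f : BN n, and_or_net G f -> synchronizes w f.
Proof.
move=> sc no_pos ncyc tau_le1.
have [n0 | n_gt0] := posnP n.
  subst n; exists [::]; split => // f _.
  by exists [ffun=> false] => x; apply/ffunP => -[].
have [v fvs_v] := fvs_singleton_of_tau_le1 n_gt0 tau_le1.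
suff [W sizeW syncW] : exists2 W : seq 'I_n, size W <= 3 * n - 1 &
    forall f, and_or_net G f -> synchronizes W f.
  exists (W ++ nseq (3 * n - 1 - size W) v); split; first by rewrite size_cat size_nseq subnKC.
  by move=> f /syncW /synchronizes_cat.
have [has_in | /forallPn[u /existsPn no_in]] := boolP [forall i, [exists j, adj G j i]].
  by apply: (synchronizing_word_ex (v := v)) => // i; apply/existsP; exact: (forallP has_in i).
by exists [:: u]; [rewrite /=; lia | exact: source_synchronizes].
Qed.
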